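(* Every maximal abelian subgroup of a Frattini-injective pro-$p$ group is isolated.
   Context: $p$ is a prime; subgroups are closed. A pro-$p$ group $G$ is Frattini-injective if distinct finitely generated subgroups of $G$ have distinct Frattini subgroups. A subgroup $H$ of $G$ is isolated if for every $x\in G$, $x^p\in H$ implies $x\in H$. *)

From HB Require Import structures.
From mathcomp Require Import all_boot monoid.
From mathcomp Require Import all_classical topology.
Set Implicit Arguments. Unset Strict Implicit. Unset Printing Implicit Defensive.

Local Open Scope classical_set_scope.
Local Open Scope group_scope.

(* A type equipped both with a (possibly infinite) group structure and a
   topology.  Continuity of the group operations is a separate condition. *)
#[short(type="topGroupType")]
HB.structure Definition TopGroup := {G of Group G & Topological G}.

Section Defs.
Variable G : topGroupType.
Implicit Types (H K N A : set G) (x y : G).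

Definition continuous_group_ops : Prop :=
  continuous (fun xy : G * G => xy.1 * xy.2^-1).

Definition is_subgroup H : Prop :=
  H 1 /\ forall x y, H x -> H y -> H (x * y^-1).

(* subgroups in the sense of the paper are closed subgroups *)
Definition closed_subgroup H : Prop := is_subgroup H /\ closed H.

Definition normal_subgroup N : Prop :=
  is_subgroup N /\ forall g x, N x -> N (g^-1 * x * g).

(* N has finite index in G equal to p ^ k for some k *)
Definition p_power_index (p : nat) N : Prop :=
  exists (k : nat) (f : 'I_(p ^ k)%N -> G),
    (forall i j, N ((f i)^-1 * f j) -> i = j) /\
    (forall x, exists i, N ((f i)^-1 * x)).

(* pro-p group: a profinite group (compact, Hausdorff, totally disconnected
   topological group) all of whose continuous finite quotients G/N
   (N open normal) are p-groups, i.e. have p-power order. *)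
Definition pro_p_group (p : nat) : Prop :=
  [/\ prime p, continuous_group_ops, compact [set: G], hausdorff_space G &
      totally_disconnected [set: G] /\
      forall N, normal_subgroup N -> open N -> p_power_index p N].

Definition closed_gen A : set G :=
  [set x | forall H, closed_subgroup H -> A `<=` H -> H x].

Definition fg_subgroup H : Prop :=
  closed_subgroup H /\ exists (n : nat) (f : 'I_n -> G), H = closed_gen (range f).

Definition open_subgroup_of H K : Prop :=
  is_subgroup K /\ K `<=` H /\ exists U, open U /\ K = U `&` H.

Definition maximal_open_subgroup_of H K : Prop :=
  [/\ open_subgroup_of H K, K <> H &
      forall L, open_subgroup_of H L -> K `<=` L -> L = K \/ L = H].

Definition frattini H : set G :=
  [set x | H x /\ forall K, maximal_open_subgroup_of H K -> K x].

Definition frattini_injective : Prop :=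
  forall H K, fg_subgroup H -> fg_subgroup K -> frattini H = frattini K -> H = K.

Definition abelian_set A : Prop := forall x y, A x -> A y -> x * y = y * x.

Definition maximal_abelian_subgroup A : Prop :=
  [/\ closed_subgroup A, abelian_set A &
      forall B, closed_subgroup B -> abelian_set B -> A `<=` B -> B = A].

Definition isolated_subgroup (p : nat) H : Prop := forall x, H (x ^+ p) -> H x.

End Defs.

From HB Require Import structures.
From mathcomp Require Import all_boot monoid.
From mathcomp Require Import all_classical topology.
Set Implicit Arguments. Unset Strict Implicit. Unset Printing Implicit Defensive.
Local Open Scope classical_set_scope.
Local Open Scope group_scope.

(* Let A be maximal abelian with x^p in A.  It suffices that every a in A
   commutes with x: the closed subgroup generated by A and x is then abelian,
   hence equal to A.  In the procyclic group H = <x> the subgroup <x^p> is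
   either H or a maximal open subgroup, so Phi(H) <= <x^p>, which a
   centralises.  Hence Phi(H^a) = Phi(H)^a = Phi(H), and Frattini-injectivity
   gives <x^a> = H.  So x^a commutes with x and (x^a x^-1)^p = (x^p)^a x^-p = 1.
   Finally there is no p-torsion: if t^p = 1 then Phi(<t>) <= <t^p> = 1 = Phi(1),
   so <t> = 1.  Thus x^a = x. *)

(* Modulo <y^(q+1)>, y^-j is congruent to y^(jq): this is what closes the
   union of the cosets of <y^p> under division. *)
Lemma expg_coset_identity (G : groupType) (y h1 h2 : G) i j q :
    commute y h1 -> commute y h2 ->
  y ^+ (i + j * q) * (h1 / h2) = (y ^+ i * h1) * ((y ^+ q.+1) ^+ j / (y ^+ j * h2)).
Proof.
move=> yh1 yh2.
have h1yq : commute h1 (y ^+ (j * q)) by apply/commuteX/commute_sym.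
have h2yj : commute h2 (y ^+ j) by apply/commuteX/commute_sym.
have -> : (y ^+ q.+1) ^+ j = y ^+ (j * q) * y ^+ j.
  by rewrite -expgnA -expgnDr mulnC mulnS addnC.
rewrite -h2yj invgM !mulgA mulgK expgnDr -!mulgA; congr (_ * _).
by rewrite !mulgA h1yq.
Qed.

Section Subgroups.
Variable G : topGroupType.
Implicit Types (S : set G) (x y : G).

Lemma subgroup1 S : is_subgroup S -> S 1.
Proof. by case. Qed.

Lemma subgroupV S x : is_subgroup S -> S x -> S x^-1.
Proof. by move=> [S1 SF] Sx; have := SF _ _ S1 Sx; rewrite mul1g. Qed.

Lemma subgroupM S x y : is_subgroup S -> S x -> S y -> S (x * y).
Proof. by move=> sS Sx Sy; have := sS.2 _ _ Sx (subgroupV sS Sy); rewrite invgK. Qed.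

Lemma subgroupX S x n : is_subgroup S -> S x -> S (x ^+ n).
Proof.
move=> sS Sx; elim: n => [|n IHn]; first exact: subgroup1.
by rewrite expgS; apply: subgroupM.
Qed.

Lemma subgroupX_gcdn S y m n : is_subgroup S -> 0 < m ->
  S (y ^+ m) -> S (y ^+ n) -> S (y ^+ gcdn m n).
Proof.
move=> sS m_gt0 Sym Syn; case: (egcdn m n) / (egcdnP n m_gt0) => a b def_am _.
have -> : y ^+ gcdn m n = (y ^+ (b * n))^-1 * y ^+ (a * m).
  by rewrite def_am expgnDr mulKg.
by rewrite mulnC [(a * m)%N]mulnC !expgnA;
  apply: subgroupM (subgroupV _ (subgroupX _ _ _)) (subgroupX _ _ _).
Qed.

End Subgroups.

Section TopologicalGroup.
Variables (G : topGroupType) (hc : continuous_group_ops G).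
Implicit Types (S H L : set G) (a c x : G).

Let continuous_id : continuous (fun u : G => u).
Proof. by move=> ?; apply: cvg_id. Qed.

Lemma continuous_divg (T : topologicalType) (f g : T -> G) :
  continuous f -> continuous g -> continuous (fun u => f u / g u).
Proof.
move=> cf cg u; apply: (@continuous2_cvg _ _ _ _ _ _ f g (fun a b => a / b)).
- exact: (@hc (f u, g u)).
- exact: cf.
- exact: cg.
Qed.

Lemma continuous_invg : continuous (fun u : G => u^-1).
Proof.
have := continuous_divg (@cst_continuous G G 1) continuous_id.
by under eq_fun do rewrite mul1g.
Qed.

Lemma continuous_mulg (T : topologicalType) (f g : T -> G) :
  continuous f -> continuous g -> continuous (fun u => f u * g u).
Proof.
move=> cf cg; have cgV : continuous (fun u => (g u)^-1).
  by move=> u; apply: continuous_comp; [exact: cg | exact: continuous_invg].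
by have := continuous_divg cf cgV; under eq_fun do rewrite invgK.
Qed.

Lemma continuous_conjg a : continuous (fun u : G => u ^ a).
Proof.
exact: continuous_mulg (@cst_continuous G G a^-1)
  (continuous_mulg continuous_id (@cst_continuous G G a)).
Qed.

Lemma closed_translate c S : closed S -> closed [set h | S (c * h)].
Proof.
exact: (continuous_closedP _).1 (continuous_mulg (@cst_continuous G G c) continuous_id) S.
Qed.

Lemma open_translate c S : open S -> open [set h | S (c * h)].
Proof.
exact: (continuousP _).1 (continuous_mulg (@cst_continuous G G c) continuous_id) S.
Qed.

Lemma closed_commute (hs : hausdorff_space G) x : closed [set g | commute g x].
Proof.
have -> : [set g | commute g x] = (fun g => (g * x) / (x * g)) @^-1` [set 1].
  by apply/seteqP; split=> g /=; [move->; rewrite mulgV | move/divg1_eq].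
apply: (continuous_closedP _).1; last exact/accessible_closed_set1/hausdorff_accessible.
exact: continuous_divg (continuous_mulg continuous_id (@cst_continuous G G x))
  (continuous_mulg (@cst_continuous G G x) continuous_id).
Qed.

Lemma open_subgroup_closed H L : closed_subgroup H -> open_subgroup_of H L -> closed L.
Proof.
move=> [sH clH] [sL [LH [U [oU defL]]]] g clLg.
have Hg : H g by apply: clH; apply: closureS clLg.
have U1 : U 1 by have := subgroup1 sL; rewrite defL => -[].
have gU : open_nbhs g [set h | U (g^-1 * h)].
  by split; [apply: open_translate | rewrite /= mulVg].
have [h [Lh Ugh]] := clLg _ (open_nbhs_nbhs gU).
have Lgh : L (g^-1 * h).
  by rewrite defL; split=> //; exact: subgroupM (subgroupV sH Hg) (LH _ Lh).
by have := subgroupM sL Lh (subgroupV sL Lgh); rewrite invgM invgK mulgA mulgV mul1g.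
Qed.

End TopologicalGroup.

Section ClosedGeneration.
Variable G : topGroupType.
Implicit Types (S L : set G) (x : G).

Lemma subset_closed_gen S : S `<=` closed_gen S.
Proof. by move=> x Sx L _; apply. Qed.

Lemma closed_gen_subG S L : closed_subgroup L -> S `<=` L -> closed_gen S `<=` L.
Proof. by move=> cL SL x; apply. Qed.

Lemma closed_subgroup_closed_gen S : closed_subgroup (closed_gen S).
Proof.
split; first split.
- by move=> L [[L1 _] _].
- by move=> x y Sx Sy L cL SL; apply: cL.1.2; [apply: Sx | apply: Sy].
have -> : closed_gen S = \bigcap_(L in [set L | closed_subgroup L /\ S `<=` L]) L.
  by apply/seteqP; split=> x Sx L; [case; apply: Sx | move=> cL SL; apply: Sx].
by apply: closed_bigI => L [[]].
Qed.

Lemma closed_gen_set1 (hs : hausdorff_space G) : closed_gen [set 1] = [set 1 : G].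
Proof.
apply/seteqP; split; last exact: subset_closed_gen.
apply: closed_gen_subG => //; split.
  by split=> // x y -> ->; rewrite mulgV.
exact/accessible_closed_set1/hausdorff_accessible.
Qed.

Definition cent S : set G := [set g | forall s, S s -> commute g s].

Lemma closed_subgroup_cent (hc : continuous_group_ops G) (hs : hausdorff_space G) S :
  closed_subgroup (cent S).
Proof.
split; first split.
- by move=> s _; apply: commute_sym; apply: commute1.
- move=> x y Sx Sy s Ss; apply: commute_sym; apply: commuteM.
    exact/commute_sym/Sx.
  exact/commuteV/commute_sym/Sy.
have -> : cent S = \bigcap_(s in S) [set g | commute g s].
  by apply/seteqP; split=> g Sg s Ss; apply: Sg.
by apply: closed_bigI => s _; apply: closed_commute.
Qed.

Lemma abelian_closed_gen (hc : continuous_group_ops G) (hs : hausdorff_space G) S :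
  abelian_set S -> abelian_set (closed_gen S).
Proof.
move=> abS; have genS_cent : closed_gen S `<=` cent S.
  by apply: closed_gen_subG; [apply: closed_subgroup_cent | move=> x Sx y; apply: abS].
move=> x y Sx Sy; have genS_cent_x : closed_gen S `<=` cent [set x].
  apply: closed_gen_subG; first exact: closed_subgroup_cent.
  by move=> s Ss _ ->; apply/commute_sym/genS_cent.
exact/commute_sym/(genS_cent_x y Sy).
Qed.

End ClosedGeneration.

Section ProcyclicFrattini.
Variables (G : topGroupType) (hc : continuous_group_ops G) (hs : hausdorff_space G).
Variables (p : nat) (p_pr : prime p) (y : G).
Implicit Types (h : G) (L : set G).

Let H := closed_gen [set y].
Let P := closed_gen [set y ^+ p].
(* H <= Q exhibits the finitely many cosets y^-i P, i < p, of P in H. *)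
Let Q := [set h | exists i : 'I_p, P (y ^+ i * h)].

Let p_gt0 : 0 < p. Proof. exact: prime_gt0. Qed.
Let sH : is_subgroup H. Proof. exact: (closed_subgroup_closed_gen _).1. Qed.
Let sP : is_subgroup P. Proof. exact: (closed_subgroup_closed_gen _).1. Qed.
Let clP : closed P. Proof. exact: (closed_subgroup_closed_gen _).2. Qed.
Let Hy : H y. Proof. exact: subset_closed_gen. Qed.
Let Pyp : P (y ^+ p). Proof. exact: subset_closed_gen. Qed.
Let sPH : P `<=` H.
Proof.
apply: closed_gen_subG => [|_ ->]; first exact: closed_subgroup_closed_gen.
exact: subgroupX sH Hy.
Qed.
Let abH : abelian_set H. Proof. by apply: abelian_closed_gen => // a b -> ->. Qed.

Let Q_expg h n : P (y ^+ n * h) -> Q h.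
Proof.
move=> Pynh; exists (Ordinal (ltn_pmod n p_gt0)) => /=.
have -> : y ^+ (n %% p) * h = ((y ^+ p) ^+ (n %/ p))^-1 * (y ^+ n * h).
  by rewrite {3}(divn_eq n p) expgnDr mulnC expgnA -mulgA mulKg.
exact: subgroupM (subgroupV sP (subgroupX _ sP Pyp)) Pynh.
Qed.

Let Q_sub_H h : Q h -> H h.
Proof.
move=> [i Pyih]; rewrite -(mulKg (y ^+ i) h).
exact: subgroupM (subgroupV sH (subgroupX _ sH Hy)) (sPH Pyih).
Qed.

Let closed_Q : closed Q.
Proof.
have -> : Q = \bigcup_(i in [set: 'I_p]) [set h | P (y ^+ i * h)].
  by apply/seteqP; split=> h [i]; exists i.
apply: closed_bigcup => [|i _]; first exact: finite_finset.
exact: (closed_translate hc (c := y ^+ i) clP).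
Qed.

Let subgroup_Q : is_subgroup Q.
Proof.
split; first by exists (Ordinal p_gt0); rewrite /= mulg1; apply: subgroup1.
move=> h1 h2 [i Pyih1] [j Pyjh2]; apply: (@Q_expg _ (i + j * p.-1)).
rewrite expg_coset_identity ?prednK //; last 2 first.
- exact: abH (Q_sub_H (ex_intro _ i Pyih1)).
- exact: abH (Q_sub_H (ex_intro _ j Pyjh2)).
exact: subgroupM Pyih1 (subgroupM sP (subgroupX _ sP Pyp) (subgroupV sP Pyjh2)).
Qed.

Let subset_H_Q : H `<=` Q.
Proof.
apply: closed_gen_subG => [|_ ->]; first exact: (conj subgroup_Q closed_Q).
by apply: (@Q_expg _ p.-1); rewrite -expgSr prednK.
Qed.

Lemma open_subgroup_closed_gen_expg : open_subgroup_of H P.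
Proof.
split; first exact: sP; split; first exact: sPH.
exists (~` \bigcup_(i in [set i : 'I_p | ~ P (y ^+ i)]) [set h | P (y ^+ i * h)]).
split.
  apply/closed_openC/closed_bigcup; first exact: finite_finset.
  by move=> i _; apply: (closed_translate hc (c := y ^+ i) clP).
apply/seteqP; split=> h.
  move=> Ph; split; last exact: sPH.
  move=> [i nPyi Pyih]; apply: nPyi.
  by have := subgroupM sP Pyih (subgroupV sP Ph); rewrite mulgK.
move=> [nUh Hh]; have [i Pyih] := subset_H_Q Hh.
have [Pyi|nPyi] := pselect (P (y ^+ i)); last by case: nUh; exists i.
by have := subgroupM sP (subgroupV sP Pyi) Pyih; rewrite mulKg.
Qed.

Lemma maximal_open_closed_gen_expg : P <> H -> maximal_open_subgroup_of H P.
Proof.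
move=> PneH; split=> [|//|L oL sPL]; first exact: open_subgroup_closed_gen_expg.
have [sL [sLH _]] := oL.
have [sLP|/existsNP[h /not_implyP[Lh nPh]]] := pselect (L `<=` P).
  by left; apply/seteqP; split.
right; have [i Pyih] := subset_H_Q (sLH h Lh).
have Lyi : L (y ^+ i).
  by have := subgroupM sL (sPL _ Pyih) (subgroupV sL Lh); rewrite mulgK.
have i_gt0 : 0 < i.
  by rewrite lt0n; apply/eqP => i0; apply: nPh; move: Pyih; rewrite i0 mul1g.
have Ly : L y.
  have coprime_ip : gcdn i p = 1%N.
    by apply/eqP; rewrite -/(coprime i p) coprime_sym prime_coprime // gtnNdvd.
  by rewrite -[y]expg1 -coprime_ip; apply: subgroupX_gcdn => //; apply: sPL.
apply/seteqP; split=> //; apply: closed_gen_subG => [|_ ->] //; split=> //.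
exact: (open_subgroup_closed hc (closed_subgroup_closed_gen [set y]) oL).
Qed.

Lemma frattini_closed_gen_sub : frattini H `<=` P.
Proof.
move=> h [Hh max_h]; have [->|PneH] := pselect (P = H) => //.
by apply: max_h; apply: maximal_open_closed_gen_expg.
Qed.

End ProcyclicFrattini.

Section Conjugation.
Variables (G : topGroupType) (hc : continuous_group_ops G).
Implicit Types (S H L : set G) (a u x : G).

Definition conjs S a : set G := [set u | S (u ^ a^-1)].

Lemma conjsK a : cancel (conjs^~ a) (conjs^~ a^-1).
Proof. by move=> S; apply/seteqP; split=> u; rewrite /conjs /= invgK conjgK. Qed.

Lemma conjsVK a : cancel (conjs^~ a^-1) (conjs^~ a).
Proof. by rewrite -{2}[a]invgK; apply: conjsK. Qed.

Lemma subgroup_conjs S a : is_subgroup S -> is_subgroup (conjs S a).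
Proof.
move=> [S1 SF]; split=> [|u v Su Sv]; first by rewrite /conjs /= conj1g.
by rewrite /conjs /= conjMg conjVg; apply: SF.
Qed.

Lemma closed_conjs S a : closed S -> closed (conjs S a).
Proof. exact: (continuous_closedP _).1 (@continuous_conjg _ hc a^-1) S. Qed.

Lemma open_conjs S a : open S -> open (conjs S a).
Proof. exact: (continuousP _).1 (@continuous_conjg _ hc a^-1) S. Qed.

Lemma closed_subgroup_conjs S a : closed_subgroup S -> closed_subgroup (conjs S a).
Proof. by move=> [sS clS]; split; [apply: subgroup_conjs | apply: closed_conjs]. Qed.

Lemma open_subgroup_conjs H L a :
  open_subgroup_of H L -> open_subgroup_of (conjs H a) (conjs L a).
Proof.
move=> [sL [sLH [U [oU defL]]]]; split; first exact: subgroup_conjs.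
split; first by move=> u; apply: sLH.
by exists (conjs U a); split; [apply: open_conjs | rewrite defL].
Qed.

Lemma maximal_open_conjs H L a :
  maximal_open_subgroup_of H L -> maximal_open_subgroup_of (conjs H a) (conjs L a).
Proof.
move=> [oL LneH maxL]; split=> [||K oK sLK]; first exact: open_subgroup_conjs.
  by move=> /(congr1 (conjs^~ a^-1)); rewrite !conjsK.
have oKa : open_subgroup_of H (conjs K a^-1).
  by rewrite -(conjsK a H); apply: open_subgroup_conjs.
have /(maxL _ oKa) : L `<=` conjs K a^-1.
  by move=> u Lu; apply: sLK; rewrite /conjs /= conjgKV.
by case=> <-; [left | right]; rewrite conjsVK.
Qed.

Lemma frattini_conjs H a : frattini (conjs H a) = conjs (frattini H) a.
Proof.
have conjs_frattini b K : conjs (frattini K) b `<=` frattini (conjs K b).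
  move=> u [Ku fratu]; split=> // M /(maximal_open_conjs b^-1); rewrite conjsK => /fratu.
  by rewrite /conjs /= invgK conjgKV.
apply/seteqP; split; last exact: conjs_frattini.
move=> u Fu; have := conjs_frattini a^-1 (conjs H a) (u ^ a^-1); rewrite conjsK; apply.
by rewrite /conjs /= invgK conjgKV.
Qed.

Lemma closed_gen_conj1 x a : closed_gen [set x ^ a] = conjs (closed_gen [set x]) a.
Proof.
apply/seteqP; split.
  apply: closed_gen_subG; first exact/closed_subgroup_conjs/closed_subgroup_closed_gen.
  by move=> _ ->; rewrite /conjs /= conjgK; apply: subset_closed_gen.
have gen_x : closed_gen [set x] `<=` conjs (closed_gen [set x ^ a]) a^-1.
  apply: closed_gen_subG; first exact/closed_subgroup_conjs/closed_subgroup_closed_gen.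
  by move=> _ ->; rewrite /conjs /= invgK; apply: subset_closed_gen.
by move=> u /gen_x; rewrite /conjs /= invgK conjgKV.
Qed.

Lemma conjs_id S a : S `<=` cent [set a] -> conjs S a = S.
Proof.
move=> cSa; have fixS u : S u -> u ^ a^-1 = u.
  by move=> Su; apply/conjg_fixP/commgP/commuteV; apply: cSa.
apply/seteqP; split=> u; last by move=> Su; rewrite /conjs /= fixS.
by move=> Sua; have /conjg_inj uaE := fixS _ Sua; rewrite -uaE.
Qed.

End Conjugation.

Lemma fg_closed_gen1 (G : topGroupType) (y : G) : fg_subgroup (closed_gen [set y]).
Proof.
split; first exact: closed_subgroup_closed_gen.
exists 1%N, (fun=> y); congr closed_gen.
by apply/seteqP; split=> [_ ->|_ [_ _ <-]] //; exists ord0.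
Qed.

Section FrattiniInjective.
Variables (G : topGroupType) (hc : continuous_group_ops G) (hs : hausdorff_space G).
Variables (p : nat) (p_pr : prime p) (fi : frattini_injective G).
Implicit Types (a t x : G).

Lemma frattini_closed_gen_expg_eq1 t :
  t ^+ p = 1 -> frattini (closed_gen [set t]) = [set 1].
Proof.
move=> tp1; apply/seteqP; split.
  by move=> u /(frattini_closed_gen_sub hc hs p_pr); rewrite tp1 closed_gen_set1.
move=> _ ->; split; first exact: subgroup1 (closed_subgroup_closed_gen _).1.
by move=> K [[sK _] _ _]; apply: subgroup1.
Qed.

Lemma expg_prime_eq1 t : t ^+ p = 1 -> t = 1.
Proof.
move=> tp1; suff gen_t1 : closed_gen [set t] = [set 1].
  by have := @subset_closed_gen _ [set t] t erefl; rewrite gen_t1.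
rewrite -closed_gen_set1 //; apply: fi; try exact: fg_closed_gen1.
by rewrite !frattini_closed_gen_expg_eq1 ?expg1n.
Qed.

Lemma commute_expg_prime a x : commute a (x ^+ p) -> commute a x.
Proof.
move=> a_xp; set H := closed_gen [set x].
have cent_frattini : frattini H `<=` cent [set a].
  move=> u /(frattini_closed_gen_sub hc hs p_pr).
  apply: closed_gen_subG; first exact: closed_subgroup_cent.
  by move=> _ -> _ ->; apply: commute_sym.
have Ha_eq : conjs H a = H.
  rewrite -(closed_gen_conj1 hc); apply: fi; try exact: fg_closed_gen1.
  by rewrite (closed_gen_conj1 hc) (frattini_conjs hc) conjs_id.
have Hxa : H (x ^ a) by rewrite -Ha_eq -(closed_gen_conj1 hc); apply: subset_closed_gen.
have abH : abelian_set H by apply: abelian_closed_gen => // ? ? -> ->.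
have xp_a : (x ^+ p) ^ a = x ^+ p by apply/conjg_fixP/commgP/commute_sym.
have /expg_prime_eq1/divg1_eq : (x ^ a / x) ^+ p = 1.
  by rewrite expgnFl -?conjXg ?xp_a ?mulgV //; apply: abH => //; apply: subset_closed_gen.
by move/conjg_fixP/commgP/commute_sym.
Qed.

End FrattiniInjective.

Theorem mainTheorem12 (p : nat) (G : topGroupType) :
  pro_p_group G p -> frattini_injective G ->
  forall A : set G, maximal_abelian_subgroup A -> isolated_subgroup p A.
Proof.
move=> [p_pr hc _ hs _] fi A [clA abA maxA] x Axp.
have cent_x a : A a -> commute a x.
  by move=> Aa; apply: (commute_expg_prime hc hs p_pr fi); apply: abA.
have abAx : abelian_set (A `|` [set x]).
  move=> a b [Aa|->] [Ab|->] //; first exact: abA.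
  - exact: cent_x.
  - exact/commute_sym/cent_x.
have sAgen : A `<=` closed_gen (A `|` [set x]).
  by move=> a Aa; apply: subset_closed_gen; left.
rewrite -(maxA _ (closed_subgroup_closed_gen _) (abelian_closed_gen hc hs abAx) sAgen).
by apply: subset_closed_gen; right.
Qed.
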